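(* For each $s$ let $\gamma_s:\mathbb N\to\mathbb N$ be any non-decreasing function with $\lambda_s(n)\le \gamma_s(n)\cdot n$ for all $n$. Then for all $n,m\ge1$: (1) for $s\ge1$, $\lambda_s(n,m)\le m-1+\lambda_s(n)$; (2) for $s\ge3$, $\lambda_s(n)\le \gamma_{s-2}(n)\cdot\lambda_s(n,2n-1)$; (3) for $s\ge2$, $\lambda_s(n)\le\gamma_{s-1}(n)\cdot\lambda_s(n,n)$; (4) for $s\ge3$, $\lambda_s(n)\le \gamma_{s-2}(\gamma_s(n))\cdot\lambda_s(n,3n-1)$.
   Context: For $s\ge1$, a sequence contains an alternation of length $s+2$ if there are distinct symbols $a\ne b$ and indices $i_1<\dots<i_{s+2}$ whose entries are alternately $a,b,a,b,\dots$. $\lambda_s(n)$ is the maximum length of a sequence using at most $n$ distinct symbols, with no two consecutive entries equal, containing no alternation of length $s+2$. A block is a sequence of pairwise distinct symbols. $\lambda_s(n,m)$ is the maximum length of a sequence using at most $n$ distinct symbols that contains no alternation of length $s+2$ and can be written as a concatenation of at most $m$ blocks (consecutive equal entries are allowed across block boundaries). *)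

From mathcomp Require Import all_boot.
Set Implicit Arguments. Unset Strict Implicit. Unset Printing Implicit Defensive.

Definition alternation (a b : nat) (k : nat) : seq nat :=
  mkseq (fun i => if odd i then b else a) k.

Definition has_alternation (k : nat) (S : seq nat) : Prop :=
  exists a b, a != b /\ subseq (alternation a b k) S.

Definition at_most_symbols (n : nat) (S : seq nat) : Prop :=
  size (undup S) <= n.

Definition adjacent_distinct (S : seq nat) : Prop :=
  forall i, i.+1 < size S -> nth 0 S i != nth 0 S i.+1.

(* S is a sequence counted by lambda_s(n) *)
Definition DS_seq (s n : nat) (S : seq nat) : Prop :=
  at_most_symbols n S /\ adjacent_distinct S /\ ~ has_alternation s.+2 S.

Definition m_block (m : nat) (S : seq nat) : Prop :=
  exists bs : seq (seq nat), size bs <= m /\ all uniq bs /\ S = flatten bs.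

(* S is a sequence counted by lambda_s(n,m) *)
Definition DS_block_seq (s n m : nat) (S : seq nat) : Prop :=
  at_most_symbols n S /\ ~ has_alternation s.+2 S /\ m_block m S.

From mathcomp Require Import all_boot zify.
Set Implicit Arguments. Unset Strict Implicit. Unset Printing Implicit Defensive.

(* (1) Deleting from a sequence of m blocks every entry equal to its
       predecessor gives a Davenport-Schinzel sequence; such repeats only occur
       at the m-1 block boundaries (block_seq_collapse).

   (2)-(4) A Davenport-Schinzel sequence S is cut greedily into windows
       [rcons O c] whose inner symbols [O] occur both before and after
       (window_cut, greedy_blocks).  Such a window has shorter alternations
       than S: one term less if [c] follows every inner symbol's recurrence
       (window_last_no_alternation), two terms less if moreover the inner
       symbols occurred before (window_inner_no_alternation).  Hence each
       window is at most gamma times longer than its set of symbols, and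
       replacing every window by that set yields an m-block subsequence of S.
       The number of windows is bounded by a potential counting first and last
       occurrences of symbols, plus the number of windows of maximal length. *)

Lemma alternationS a b k : alternation a b k.+1 = a :: alternation b a k.
Proof.
rewrite /alternation /mkseq /=; congr (_ :: _).
by rewrite -[1]addn0 iotaDl -map_comp; apply: eq_map => i /=; case: (odd i).
Qed.

Lemma alternation_rcons a b k :
  alternation a b k.+1 = rcons (alternation a b k) (if odd k then b else a).
Proof. by rewrite /alternation mkseqS. Qed.

Lemma alternation_mem a b k : 2 <= k ->
  (a \in alternation a b k) && (b \in alternation a b k).
Proof. by case: k => [|[|k]] // _; rewrite !alternationS !inE !eqxx /= orbT. Qed.

Lemma no_alternation_subseq k (A C : seq nat) :
  subseq A C -> ~ has_alternation k C -> ~ has_alternation k A.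
Proof.
by move=> sAC NC [a [b [ab H]]]; apply: NC; exists a, b; split; last exact: subseq_trans H sAC.
Qed.

Lemma subseq_rcons_inv (T : eqType) (u W : seq T) e c :
  subseq (rcons u e) (rcons W c) -> subseq u W /\ (e != c -> subseq (rcons u e) W).
Proof.
rewrite -subseq_rev !rev_rcons /=; case: eqVneq => [-> H | ec H].
  by rewrite subseq_rev in H; split => //; rewrite eqxx.
have uW : subseq (rcons u e) W by rewrite -subseq_rev rev_rcons.
by split; first exact: subseq_trans (subseq_rcons u e) uW.
Qed.

Lemma subseq_rcons_extend (T : eqType) (u W R : seq T) e c d :
  subseq (rcons u e) (rcons W c) -> e != d -> d \in c :: R ->
  subseq (rcons (rcons u e) d) (rcons W c ++ R).
Proof.
move=> H ed; rewrite inE; have [dR _|dR] := boolP (d \in R).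
  by rewrite -cats1; apply: cat_subseq => //; rewrite sub1seq.
rewrite orbF => /eqP dc; subst d.
have [_ /(_ ed) uW] := subseq_rcons_inv H.
apply: subseq_trans (prefix_subseq _ _).
by rewrite -subseq_rev !rev_rcons /= eqxx -rev_rcons subseq_rev.
Qed.

Lemma alternation_extend x y k (W R : seq nat) c :
  x != y -> x \in c :: R -> y \in c :: R ->
  subseq (alternation x y k.+1) (rcons W c) ->
  subseq (alternation x y k.+2) (rcons W c ++ R).
Proof.
move=> xy xR yR; rewrite !alternation_rcons => H.
by apply: subseq_rcons_extend H _ _; rewrite /=; case: (odd k); rewrite // eq_sym.
Qed.

(* A window [rcons O c] of a sequence [P ++ O ++ c :: R] without alternations
   of length s+2, such that every symbol of [O] recurs in [c :: R], has no
   alternation of length s+1: any such alternation would extend into [R]. *)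
Lemma window_last_no_alternation s (P O R : seq nat) c : 2 <= s ->
  ~ has_alternation s.+2 (P ++ O ++ c :: R) -> {subset O <= c :: R} ->
  ~ has_alternation s.+1 (rcons O c).
Proof.
move=> hs NA OR [x [y [xy H]]]; apply: NA; exists x, y; split => //.
move: (H); rewrite alternation_rcons => /subseq_rcons_inv[/mem_subseq altO _].
have /andP[/altO xO /altO yO] := alternation_mem x y hs.
apply: subseq_trans (alternation_extend xy (OR _ xO) (OR _ yO) H) _.
by rewrite cat_rcons; exact: suffix_subseq.
Qed.

(* If moreover every symbol of [O] already occurs in [P], an alternation can
   also be extended by one term on the left, so the window has none of
   length s. *)
Lemma window_inner_no_alternation s (P O R : seq nat) c : 3 <= s ->
  ~ has_alternation s.+2 (P ++ O ++ c :: R) ->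
  {subset O <= P} -> {subset O <= c :: R} ->
  ~ has_alternation s (rcons O c).
Proof.
case: s => // s hs NA OP OR [x [y [xy H]]]; apply: NA.
have yx : y != x by rewrite eq_sym.
exists y, x; split => //.
move: (H); rewrite alternation_rcons => /subseq_rcons_inv[/mem_subseq altO _].
have /andP[/altO xO /altO yO] := alternation_mem x y hs.
have Hy : subseq (alternation y x s.+2) (rcons (P ++ O) c).
  rewrite alternationS rcons_cat -cat1s; apply: cat_subseq => //.
  by rewrite sub1seq OP.
rewrite -cat_rcons catA -rcons_cat.
exact: alternation_extend yx (OR _ yO) (OR _ xO) Hy.
Qed.

Lemma size_undup_subset (T : eqType) (A C : seq T) :
  {subset A <= C} -> size (undup A) <= size (undup C).
Proof.
move=> sAC; apply: uniq_leq_size; first exact: undup_uniq.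
by move=> z; rewrite !mem_undup => /sAC.
Qed.

Lemma size_undup_subset_lt (T : eqType) (A C : seq T) z :
  {subset A <= C} -> z \in C -> z \notin A -> size (undup A) < size (undup C).
Proof.
move=> sAC zC zA; apply: (@uniq_leq_size _ (z :: undup A)).
  by rewrite /= mem_undup zA undup_uniq.
by move=> w; rewrite inE mem_undup => /predU1P[->|/sAC]; rewrite mem_undup.
Qed.

Lemma at_most_symbols_subseq n (A C : seq nat) :
  subseq A C -> at_most_symbols n C -> at_most_symbols n A.
Proof. by move=> /mem_subseq/size_undup_subset; exact: leq_trans. Qed.

Lemma at_most_symbols_infix n (P W R : seq nat) :
  at_most_symbols n (P ++ W ++ R) -> at_most_symbols n W.
Proof. exact/at_most_symbols_subseq/(subseq_trans (prefix_subseq W R))/suffix_subseq. Qed.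

Lemma adjacent_distinctP (S : seq nat) :
  adjacent_distinct S <-> sorted (fun x y => x != y) S.
Proof. exact: rwP (sortedP 0). Qed.

Lemma adjacent_distinct_infix (P W R : seq nat) :
  adjacent_distinct (P ++ W ++ R) -> adjacent_distinct W.
Proof. by move/adjacent_distinctP/cat_sorted2=> [_ /cat_sorted2[/adjacent_distinctP]]. Qed.

Fixpoint collapse (p : nat) (t : seq nat) : seq nat :=
  if t is y :: t' then (if y == p then collapse p t' else y :: collapse y t') else [::].

Fixpoint repeats (p : nat) (t : seq nat) : nat :=
  if t is y :: t' then (y == p) + repeats y t' else 0.

Lemma collapse_sorted p t : path (fun x y => x != y) p (collapse p t).
Proof.
elim: t p => // y t IH p /=; case: eqVneq => [_|yp]; first exact: IH.
by rewrite /= eq_sym yp; exact: IH.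
Qed.

Lemma collapse_subseq p t : subseq (p :: collapse p t) (p :: t).
Proof.
elim: t p => // y t IH p; rewrite [collapse p _]/=; case: eqVneq => [->|yp].
  by apply: subseq_trans (IH p) _; exact: subseq_cons.
by rewrite -[p :: y :: collapse y t]cat1s -[p :: y :: t]cat1s; exact: cat_subseq.
Qed.

Lemma size_collapse p t : size t = size (collapse p t) + repeats p t.
Proof.
elim: t p => // y t IH p /=.
by case: eqVneq => [->|_] /=; rewrite ?eqxx; [rewrite (IH p) | rewrite (IH y)]; lia.
Qed.

Definition adjacent_repeats (T : seq nat) : nat :=
  if T is x :: t then repeats x t else 0.

Lemma adjacent_repeats_cat A C :
  adjacent_repeats (A ++ C) <= adjacent_repeats A + adjacent_repeats C + 1.
Proof.
case: A => [|a A] /=; first lia.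
elim: A a => [|a' A IH] a /=; last by have := IH a'; lia.
by case: C => //= c C; case: (c == a) => /=; lia.
Qed.

Lemma adjacent_repeats_uniq A : uniq A -> adjacent_repeats A = 0.
Proof.
case: A => // a A; elim: A a => // a' A IH a /= /andP[].
by rewrite inE negb_or => /andP[aa _] u; rewrite eq_sym (negbTE aa) /=; exact: IH.
Qed.

Lemma adjacent_repeats_flatten bs :
  all uniq bs -> adjacent_repeats (flatten bs) <= (size bs).-1.
Proof.
elim: bs => // b [|b' bs] IH /= /andP[ub ubs]; first by rewrite cats0 adjacent_repeats_uniq.
have := adjacent_repeats_cat b (flatten (b' :: bs)); rewrite (adjacent_repeats_uniq ub).
by have := IH ubs; rewrite /=; lia.
Qed.

Lemma block_seq_collapse s n m T : DS_block_seq s n m T ->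
  exists S, DS_seq s n S /\ size T <= m - 1 + size S.
Proof.
move=> [T_sym [T_alt [bs [bs_m [bs_uniq T_bs]]]]].
case: T T_sym T_alt T_bs => [|x t] T_sym T_alt T_bs.
  by exists [::]; split => //; split => //; split => // i.
have sub := collapse_subseq x t.
exists (x :: collapse x t); split.
  split; first exact: at_most_symbols_subseq sub T_sym.
  split; first exact/adjacent_distinctP/collapse_sorted.
  exact: no_alternation_subseq sub T_alt.
have := adjacent_repeats_flatten bs_uniq; rewrite -T_bs /= (size_collapse x t); lia.
Qed.

Lemma window_cut k (B R : seq nat) : 0 < k -> R != [::] ->
  exists O c R2, [/\ R = O ++ c :: R2, {subset O <= B}, {subset O <= c :: R2},
    size O < k & (c \notin B ++ O) || (c \notin R2) || (size O == k.-1)].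
Proof.
elim: R B k => // x R IH B k k_gt0 _.
have [cut | ] := boolP [|| x \notin B, x \notin R | k == 1].
  exists [::], x, R; split => //; rewrite cats0.
  by case/or3P: cut => [->|->|/eqP ->]; rewrite ?orbT.
rewrite !negb_or !negbK => /and3P[xB xR k1].
have k1_gt0 : 0 < k.-1 by lia.
have [|O [c [R2 [RE OB OR Ok cut]]]] := IH (rcons B x) k.-1 k1_gt0.
  by case: (R) xR.
exists (x :: O), c, R2; split.
- by rewrite RE.
- by move=> z /predU1P[->|/OB]; rewrite // mem_rcons inE => /predU1P[->|].
- by move=> z /predU1P[->|/OR //]; move: xR; rewrite RE mem_cat => /orP[/OR|].
- by rewrite /=; lia.
- move: cut; rewrite cat_rcons /= => /orP[->//|/eqP Ok1].
  by apply/orP; right; apply/eqP; lia.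
Qed.

Definition potential (B R : seq nat) : nat :=
  size (undup R) + size (undup [seq x <- R | x \notin B]).

Lemma potential_cut (B O R2 : seq nat) c :
  potential (B ++ rcons O c) R2 <= potential B (O ++ c :: R2) /\
  ((c \notin B ++ O) || (c \notin R2) ->
     potential (B ++ rcons O c) R2 < potential B (O ++ c :: R2)).
Proof.
set R := O ++ c :: R2.
have cR : c \in R by rewrite mem_cat mem_head orbT.
have R2R : {subset R2 <= R} by move=> z zR2; rewrite mem_cat inE zR2 !orbT.
have newR : {subset [seq x <- R2 | x \notin B ++ rcons O c] <= [seq x <- R | x \notin B]}.
  by move=> z; rewrite !mem_filter mem_cat negb_or => /andP[/andP[-> _] /R2R].
have le1 := size_undup_subset R2R; have le2 := size_undup_subset newR.
rewrite /potential; split; first exact: leq_add.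
case/orP => [c_new | c_last].
- suff : size (undup [seq x <- R2 | x \notin B ++ rcons O c]) <
         size (undup [seq x <- R | x \notin B]) by lia.
  apply: (size_undup_subset_lt newR (z := c)).
    by rewrite mem_filter cR andbT; move: c_new; rewrite mem_cat negb_or => /andP[].
  by rewrite mem_filter mem_cat mem_rcons mem_head orbT.
- suff : size (undup R2) < size (undup R) by lia.
  exact: size_undup_subset_lt R2R cR c_last.
Qed.

Lemma leq_mul_slack k a b r : r < k -> k * b <= k * a + r -> b <= a.
Proof.
move=> rk kb; rewrite -ltnS -(@ltn_pmul2l k) ?mulnS; first lia.
exact: leq_ltn_trans (leq0n r) rk.
Qed.

Section GreedyDecomposition.

(* [S] is the sequence being decomposed, [B0] symbols considered as already
   seen, [k] the maximal window length, and [G] a bound on the average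
   multiplicity of the symbols in each window. *)
Variables (S B0 : seq nat) (k G : nat).
Hypothesis k_gt0 : 0 < k.
Hypothesis window_bound : forall P O c R2, S = P ++ O ++ c :: R2 ->
  {subset O <= B0 ++ P} -> {subset O <= c :: R2} -> size O < k ->
  size (rcons O c) <= G * size (undup (rcons O c)).

(* Replacing each window by its set of symbols yields blocks whose number is
   controlled by the potential (productive cuts) and by [size R %/ k]
   (full windows), and which keep a [1/G] fraction of the length. *)
Lemma greedy_blocks R P : S = P ++ R -> exists bs : seq (seq nat),
  [/\ all uniq bs, subseq (flatten bs) R,
      k * size bs <= k * potential (B0 ++ P) R + size R &
      size R <= G * size (flatten bs)].
Proof.
have [N] := ubnP (size R); elim: N R P => // N IH R P szR SE.
have [->|R_nil] := eqVneq R [::]; first by exists [::]; rewrite muln0.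
have [O [c [R2 [RE OB OR Ok cut]]]] := window_cut (B0 ++ P) k_gt0 R_nil.
have SE2 : S = (P ++ rcons O c) ++ R2 by rewrite SE RE -catA cat_rcons.
have [|bs [bs_uniq bs_sub bs_num bs_len]] := IH R2 (P ++ rcons O c) _ SE2.
  by move: szR; rewrite RE size_cat /=; lia.
have [pot_le pot_lt] := potential_cut (B0 ++ P) O R2 c.
rewrite catA in bs_num; rewrite -RE in pot_le pot_lt.
have szRE : size R = size O + (size R2).+1 by rewrite RE size_cat.
exists (undup (rcons O c) :: bs); split.
- by rewrite /= undup_uniq.
- by rewrite RE -cat_rcons; apply: cat_subseq => //; exact: undup_subseq.
- rewrite /=; case/orP: cut => [/pot_lt lt | /eqP full].
  + have : k * (potential ((B0 ++ P) ++ rcons O c) R2).+1 <= k * potential (B0 ++ P) R.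
      by rewrite leq_mul2l lt orbT.
    nia.
  + have : k * potential ((B0 ++ P) ++ rcons O c) R2 <= k * potential (B0 ++ P) R.
      by rewrite leq_mul2l pot_le orbT.
    nia.
- have := window_bound (etrans SE (congr1 _ RE)) OB OR Ok.
  by rewrite /= size_cat size_rcons; lia.
Qed.

End GreedyDecomposition.

(* With all of [S] declared as seen and unbounded windows, every cut is at a
   last occurrence; there are at most n of them, and each window loses one
   alternation term (window_last_no_alternation). *)
Lemma greedy_last_windows s n G S : 2 <= s -> DS_seq s n S ->
  (forall P W R, S = P ++ W ++ R -> ~ has_alternation s.+1 W ->
     size W <= G * size (undup W)) ->
  exists bs : seq (seq nat), [/\ all uniq bs, subseq (flatten bs) S,
    size bs <= n & size S <= G * size (flatten bs)].
Proof.
move=> hs [S_sym [_ S_alt]] W_bound.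
have [|bs [bs_uniq bs_sub bs_num bs_len]] :=
  @greedy_blocks S S (size S).+1 G (ltn0Sn _) _ S [::] erefl.
  move=> P O c R2 SE _ OR _; apply: (W_bound P (rcons O c) R2); first by rewrite SE cat_rcons.
  by apply: (window_last_no_alternation (P := P) hs) OR; rewrite -SE.
exists bs; split => //.
have no_new : [seq x <- S | x \notin S] = [::].
  by rewrite (eq_in_filter (a2 := pred0)) ?filter_pred0 // => x ->.
move: bs_num; rewrite /potential cats0 no_new /= addn0.
by move/(leq_mul_slack (ltnSn _))/leq_trans; apply.
Qed.

Lemma potential_after_pair (s0 s1 : nat) (R : seq nat) : s0 != s1 ->
  potential [:: s0; s1] R + 2 <= 2 * size (undup [:: s0, s1 & R]).
Proof.
move=> s01; rewrite /potential.
have le1 : size (undup R) <= size (undup [:: s0, s1 & R]).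
  by apply: size_undup_subset => z zR; rewrite !inE zR !orbT.
suff : (size (undup [seq x <- R | x \notin [:: s0; s1]])).+2 <=
       size (undup [:: s0, s1 & R]) by lia.
apply: (@uniq_leq_size _ [:: s0, s1 & undup [seq x <- R | x \notin [:: s0; s1]]]).
  by rewrite /= !inE !mem_undup !mem_filter !inE !eqxx orbF orbT (negbTE s01) undup_uniq.
move=> z; rewrite !inE mem_undup mem_filter mem_undup !inE.
by case/or3P => [->|->|/andP[_ ->]]; rewrite ?orbT.
Qed.

(* Windows of length at most [k] whose inner symbols occur before and after:
   they lose two alternation terms (window_inner_no_alternation), and the
   number of blocks is at most 2n-1 plus [size S %/ k]. *)
Lemma greedy_inner_windows s n k G S : 3 <= s -> 1 <= n -> 0 < k -> 0 < G ->
  DS_seq s n S ->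
  (forall P W R, S = P ++ W ++ R -> size W <= k -> ~ has_alternation s W ->
     size W <= G * size (undup W)) ->
  exists bs : seq (seq nat), [/\ all uniq bs, subseq (flatten bs) S,
    k * size bs <= k * (2 * n - 1) + size S & size S <= G * size (flatten bs)].
Proof.
move=> hs n_gt0 k_gt0 G_gt0 [S_sym [S_adj S_alt]] W_bound.
case: S S_sym S_adj S_alt W_bound => [|s0 [|s1 R]] S_sym S_adj S_alt W_bound.
- exists [:: [::]]; split => //.
  by rewrite /= muln1 addn0 -{1}[k]muln1 leq_mul2l; lia.
- exists [:: [:: s0]]; split => //; last by rewrite /= muln1.
  by rewrite /= muln1 -{1}[k]muln1 (leq_trans _ (leq_addr _ _)) // leq_mul2l; lia.
have s01 : s0 != s1 by exact: S_adj 0 isT.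
have [|bs [bs_uniq bs_sub bs_num bs_len]] :=
  @greedy_blocks [:: s0, s1 & R] [::] k G k_gt0 _ R [:: s0; s1] erefl.
  move=> P O c R2 SE OP OR Ok; apply: (W_bound P (rcons O c) R2).
  - by rewrite SE cat_rcons.
  - by rewrite size_rcons.
  - by apply: (window_inner_no_alternation (P := P) hs) OP OR; rewrite -SE.
exists ([:: s0; s1] :: bs); split.
- by rewrite /= inE s01 bs_uniq.
- exact: (cat_subseq (subseq_refl [:: s0; s1]) bs_sub).
- have pot_n : potential [:: s0; s1] R <= 2 * n - 2.
    by have := potential_after_pair R s01; move: S_sym; rewrite /at_most_symbols; lia.
  have : k * potential [:: s0; s1] R <= k * (2 * n - 2) by rewrite leq_mul2l pot_n orbT.
  have -> : 2 * n - 1 = (2 * n - 2).+1 by lia.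
  by move: bs_num; rewrite cat0s /= !mulnS; lia.
- by move: bs_len; rewrite /= !mulnS; lia.
Qed.

Lemma blocks_DS_block_seq s n M S (bs : seq (seq nat)) : DS_seq s n S ->
  all uniq bs -> subseq (flatten bs) S -> size bs <= M ->
  DS_block_seq s n M (flatten bs).
Proof.
move=> [S_sym [_ S_alt]] bs_uniq bs_sub bs_M; split.
  exact: at_most_symbols_subseq bs_sub S_sym.
by split; [exact: no_alternation_subseq bs_sub S_alt | exists bs].
Qed.

Section LengthBounds.

Variable gamma : nat -> nat -> nat.
Hypothesis gamma_mono : forall t, {homo gamma t : x y / x <= y}.
Hypothesis gamma_bound : forall t N S, 1 <= t -> DS_seq t N S -> size S <= gamma t N * N.
Variable n : nat.
Hypothesis n_gt0 : 1 <= n.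

(* The singleton sequence shows that [gamma t N] is positive. *)
Lemma gamma_gt0 t N : 1 <= t -> 1 <= N -> 0 < gamma t N.
Proof.
move=> t_gt0 N_gt0; have singleton : DS_seq t N [:: 0].
  split; first by rewrite /at_most_symbols.
  split; first by move=> [|i].
  by move=> [a [b [_ /size_subseq]]]; rewrite size_mkseq /=; lia.
by have := gamma_bound t_gt0 singleton; rewrite /=; case: (gamma t N).
Qed.

(* An infix [W] of a Davenport-Schinzel sequence without alternations of
   length t+2 is itself one of order [t], so its length is at most
   [gamma t N] times its number of symbols, for any [N] bounding the latter. *)
Lemma infix_length_bound t s m N (P W R : seq nat) : 1 <= t ->
  DS_seq s m (P ++ W ++ R) -> ~ has_alternation t.+2 W -> size (undup W) <= N ->
  size W <= gamma t N * size (undup W).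
Proof.
move=> t_gt0 [_ [S_adj _]] W_alt W_N.
have W_DS : DS_seq t (size (undup W)) W.
  by split; [exact: leqnn | split; [exact: adjacent_distinct_infix S_adj |]].
apply: leq_trans (gamma_bound t_gt0 W_DS) _.
by rewrite leq_mul2r gamma_mono ?orbT.
Qed.

Lemma DS_seq_blocks_2n s S : 3 <= s -> DS_seq s n S ->
  exists T, DS_block_seq s n (2 * n - 1) T /\ size S <= gamma (s - 2) n * size T.
Proof.
move=> hs S_DS; have s2_gt0 : 1 <= s - 2 by lia.
have [|bs [bs_uniq bs_sub bs_num bs_len]] := greedy_inner_windows hs n_gt0
  (ltn0Sn (size S)) (gamma_gt0 s2_gt0 n_gt0) S_DS.
  move=> P W R SE _ W_alt; apply: (infix_length_bound (s := s) (m := n) (P := P) (R := R)).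
  - by lia.
  - by rewrite -SE.
  - by have -> : (s - 2).+2 = s by lia.
  - by move: S_DS; rewrite SE => -[/at_most_symbols_infix].
exists (flatten bs); split => //; apply: blocks_DS_block_seq S_DS bs_uniq bs_sub _.
exact: leq_mul_slack (ltnSn _) bs_num.
Qed.

Lemma DS_seq_blocks_n s S : 2 <= s -> DS_seq s n S ->
  exists T, DS_block_seq s n n T /\ size S <= gamma (s - 1) n * size T.
Proof.
move=> hs S_DS.
have [|bs [bs_uniq bs_sub bs_num bs_len]] := greedy_last_windows (G := gamma (s - 1) n) hs S_DS.
  move=> P W R SE W_alt; apply: (infix_length_bound (s := s) (m := n) (P := P) (R := R)).
  - by lia.
  - by rewrite -SE.
  - by have -> : (s - 1).+2 = s.+1 by lia.
  - by move: S_DS; rewrite SE => -[/at_most_symbols_infix].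
by exists (flatten bs); split => //; exact: blocks_DS_block_seq S_DS bs_uniq bs_sub _.
Qed.

(* Part (4): lambda_s(n) <= gamma_{s-2}(gamma_s(n)) * lambda_s(n, 3n-1), using
   windows of length at most gamma_s(n), at most n of which are full. *)
Lemma DS_seq_blocks_3n s S : 3 <= s -> DS_seq s n S ->
  exists T, DS_block_seq s n (3 * n - 1) T /\
    size S <= gamma (s - 2) (gamma s n) * size T.
Proof.
move=> hs S_DS; set k := gamma s n; have s2_gt0 : 1 <= s - 2 by lia.
have k_gt0 : 0 < k by apply: gamma_gt0 => //; lia.
have S_len : size S <= k * n by apply: gamma_bound => //; lia.
have [|bs [bs_uniq bs_sub bs_num bs_len]] := greedy_inner_windows hs n_gt0
  k_gt0 (gamma_gt0 s2_gt0 k_gt0) S_DS.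
  move=> P W R SE W_k W_alt; apply: (infix_length_bound (s := s) (m := n) (P := P) (R := R)).
  - by lia.
  - by rewrite -SE.
  - by have -> : (s - 2).+2 = s by lia.
  - exact: leq_trans (size_undup W) W_k.
exists (flatten bs); split => //; apply: blocks_DS_block_seq S_DS bs_uniq bs_sub _.
have -> : 3 * n - 1 = (2 * n - 1) + n by lia.
rewrite -(leq_pmul2l k_gt0) mulnDr; apply: leq_trans bs_num _.
by rewrite leq_add2l.
Qed.

End LengthBounds.

Theorem lemma1 (gamma : nat -> nat -> nat)
  (Hmono : forall s, {homo gamma s : x y / x <= y})
  (Hgamma : forall s n S, 1 <= s -> DS_seq s n S -> size S <= gamma s n * n)
  (n m : nat) (Hn : 1 <= n) (Hm : 1 <= m) :
  (forall s, 1 <= s -> forall T, DS_block_seq s n m T ->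
     exists S, DS_seq s n S /\ size T <= m - 1 + size S) /\
  (forall s, 3 <= s -> forall S, DS_seq s n S ->
     exists T, DS_block_seq s n (2 * n - 1) T /\
       size S <= gamma (s - 2) n * size T) /\
  (forall s, 2 <= s -> forall S, DS_seq s n S ->
     exists T, DS_block_seq s n n T /\
       size S <= gamma (s - 1) n * size T) /\
  (forall s, 3 <= s -> forall S, DS_seq s n S ->
     exists T, DS_block_seq s n (3 * n - 1) T /\
       size S <= gamma (s - 2) (gamma s n) * size T).
Proof.
split; first by move=> s _ T; exact: block_seq_collapse.
split; first by move=> s hs S; exact: (DS_seq_blocks_2n Hmono Hgamma Hn hs).
split; first by move=> s hs S; exact: (DS_seq_blocks_n Hmono Hgamma Hn hs).
by move=> s hs S; exact: (DS_seq_blocks_3n Hmono Hgamma Hn hs).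
Qed.
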